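(* Let $F_2$ be free on $x,y$ and let $\alpha\in\mathrm{Aut}(F_2)$ be given by $\alpha(x)=x$, $\alpha(y)=yx$. Then the group $G=F_2\rtimes_\alpha\mathbb{Z}$ satisfies $m_p(G)\le 6$ for every characteristic $p$ (zero or prime).
   Context: $F_2\rtimes_\alpha\mathbb{Z}$ is the semidirect product in which the generator $t$ of $\mathbb{Z}$ acts by $tgt^{-1}=\alpha(g)$. $m_p(H)$ is the minimal $d$ such that $H$ embeds in $GL(d,\mathbb{F})$ for some field $\mathbb{F}$ of characteristic $p$ ($\infty$ if none). *)

From HB Require Import structures.
From mathcomp Require Import all_boot all_order all_algebra.
Set Implicit Arguments. Unset Strict Implicit. Unset Printing Implicit Defensive.
Import Order.TTheory GRing.Theory Num.Theory.

(* A letter is (is_y, inverted): (false,false)=x, (false,true)=x^-1,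
   (true,false)=y, (true,true)=y^-1. *)
Definition letter := (bool * bool)%type.
Definition linv (l : letter) : letter := (l.1, ~~ l.2).

Fixpoint reduce (w : seq letter) : seq letter :=
  match w with
  | [::] => [::]
  | a :: w' =>
      let r := reduce w' in
      match r with
      | b :: r' => if b == linv a then r' else a :: r
      | [::] => [:: a]
      end
  end.

Fixpoint reducedb (w : seq letter) : bool :=
  match w with
  | a :: ((b :: _) as w') => (b != linv a) && reducedb w'
  | _ => true
  end.

Lemma reducedb_tail a w : reducedb (a :: w) -> reducedb w.
Proof. by case: w => [|b w] //= /andP[]. Qed.

Lemma reduce_reduced w : reducedb (reduce w).
Proof.
elim: w => [|a w IH] //=.
case E: (reduce w) IH => [|b r] //= H.
case: ifP => [_|/negbT nb]; first exact: reducedb_tail H.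
by rewrite /= H andbT.
Qed.

(* the automorphism alpha: x |-> x, y |-> y x, and its inverse
   alpha^-1: x |-> x, y |-> y x^-1 *)
Definition alpha_l (l : letter) : seq letter :=
  match l with
  | (false, b) => [:: (false, b)]
  | (true, false) => [:: (true, false); (false, false)]
  | (true, true) => [:: (false, true); (true, true)]
  end.
Definition alphainv_l (l : letter) : seq letter :=
  match l with
  | (false, b) => [:: (false, b)]
  | (true, false) => [:: (true, false); (false, true)]
  | (true, true) => [:: (false, false); (true, true)]
  end.
Definition walpha (w : seq letter) := reduce (flatten (map alpha_l w)).
Definition walphainv (w : seq letter) := reduce (flatten (map alphainv_l w)).
Definition alpha_pow (n : int) (w : seq letter) : seq letter :=
  match n with
  | Posz k => iter k walpha w
  | Negz k => iter k.+1 walphainv w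
  end.

(* An element (w, n) stands for w t^n, where t g t^-1 = alpha(g). Hence
   (w1 t^n1)(w2 t^n2) = w1 alpha^n1(w2) t^(n1+n2). *)
Definition G := {p : seq letter * int | reducedb p.1}.

Definition gmul (g h : G) : G :=
  exist (fun p : seq letter * int => reducedb p.1)
    (reduce ((sval g).1 ++ alpha_pow (sval g).2 (sval h).1), ((sval g).2 + (sval h).2)%R)
    (reduce_reduced _).

Definition has_char (F : fieldType) (p : nat) : Prop :=
  if p == 0%N then [pchar F]%R =i pred0 else p \in [pchar F]%R.

Definition embeds_in_GL (d : nat) (F : fieldType) : Prop :=
  exists rho : G -> 'M[F]_d,
    (forall g, rho g \in unitmx) /\
    (forall g h, rho (gmul g h) = (rho g *m rho h)%R) /\
    injective rho.

From HB Require Import structures.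
From mathcomp Require Import all_boot all_order all_algebra.
From mathcomp Require Import ring zify.

(* Over L(s), where L = K(lam) with K = Q or F_p, send t^n to tmx n = diag(lam^n, 1, 1),
   x^n to xmx n = diag(lam^-n, lam^n, 1), and y, y^-1 to the pencils Y0 + s N, Y0 + s N'
   where Y0 swaps the first two coordinates and N, N' are rank-one matrices with
   N N' = N' N = 0 and Y0 N' + N Y0 = Y0 N + N' Y0 = 0, so that the two pencils are
   mutually inverse.  The relation t y t^-1 = y x becomes T Y = Y X T with
   X T = diag(1, lam, 1); it holds coefficientwise because Y0 exchanges diag(lam, 1, 1)
   and diag(1, lam, 1), while N has a zero first row and a zero second column.

   For faithfulness, read the image of a reduced word w as a polynomial in s with
   matrix coefficients.  If w contains k letters y^(+-1), its coefficient of s^k is a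
   rank-one matrix c r with r <> 0, where the column c = xmx n u only depends on the
   exponent n of the leading power of x in w and on the first y-letter (u spans the
   column space of N or N').  Writing N = u v, prefixing y to w replaces c by u and r
   by (v c) r, and the scalar v c vanishes exactly when y x^0 y^-1 cancels, which
   reducedness forbids (likewise for y^-1).  Hence the image of w t^n determines the
   first letter of w, and peeling letters off shows that the representation is
   injective, so that m_p(G) <= 3. *)

Set Implicit Arguments. Unset Strict Implicit. Unset Printing Implicit Defensive.
Import Order.TTheory GRing.Theory.
Local Open Scope ring_scope.

Section Matrix3.
Variable R : pzSemiRingType.

Definition mx3 (a b c d e f g h k : R) : 'M[R]_3 :=
  \matrix_(i, j) nth 0 (nth [::] [:: [:: a; b; c]; [:: d; e; f]; [:: g; h; k]] i) j.

Definition col3 (a b c : R) : 'cV[R]_3 := \col_i nth 0 [:: a; b; c] i.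
Definition row3 (a b c : R) : 'rV[R]_3 := \row_j nth 0 [:: a; b; c] j.

Lemma ord3P (P : 'I_3 -> Prop) : P 0 -> P 1 -> P 2%:R -> forall i, P i.
Proof.
move=> P0 P1 P2 [[|[|[|i]]] lti] //.
- by rewrite (_ : Ordinal lti = 0) //; apply: val_inj.
- by rewrite (_ : Ordinal lti = 1) //; apply: val_inj.
- by rewrite (_ : Ordinal lti = 2%:R) //; apply: val_inj.
Qed.

Lemma mul_mx3 a b c d e f g h k a' b' c' d' e' f' g' h' k' :
  mx3 a b c d e f g h k * mx3 a' b' c' d' e' f' g' h' k' =
  mx3 (a*a' + b*d' + c*g') (a*b' + b*e' + c*h') (a*c' + b*f' + c*k')
      (d*a' + e*d' + f*g') (d*b' + e*e' + f*h') (d*c' + e*f' + f*k')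
      (g*a' + h*d' + k*g') (g*b' + h*e' + k*h') (g*c' + h*f' + k*k').
Proof.
apply/matrixP; elim/ord3P; elim/ord3P;
  by rewrite -mulmxE !mxE !big_ord_recl big_ord0 !mxE /= addr0 addrA.
Qed.

Lemma mx3_1 : 1 = mx3 1 0 0 0 1 0 0 0 1.
Proof. by apply/matrixP; elim/ord3P; elim/ord3P; rewrite !mxE. Qed.

Lemma mx3_0 : 0 = mx3 0 0 0 0 0 0 0 0 0.
Proof. by apply/matrixP; elim/ord3P; elim/ord3P; rewrite !mxE. Qed.

Lemma add_mx3 a b c d e f g h k a' b' c' d' e' f' g' h' k' :
  mx3 a b c d e f g h k + mx3 a' b' c' d' e' f' g' h' k' =
  mx3 (a+a') (b+b') (c+c') (d+d') (e+e') (f+f') (g+g') (h+h') (k+k').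
Proof. by apply/matrixP; elim/ord3P; elim/ord3P; rewrite !mxE. Qed.

Lemma col3_mul_row3 a b c a' b' c' :
  col3 a b c *m row3 a' b' c' =
  mx3 (a*a') (a*b') (a*c') (b*a') (b*b') (b*c') (c*a') (c*b') (c*c').
Proof. by apply/matrixP; elim/ord3P; elim/ord3P; rewrite !mxE big_ord1 !mxE. Qed.

Lemma mx3_mul_col3 a b c d e f g h k a' b' c' :
  mx3 a b c d e f g h k *m col3 a' b' c' =
  col3 (a*a' + b*b' + c*c') (d*a' + e*b' + f*c') (g*a' + h*b' + k*c').
Proof.
apply/matrixP; elim/ord3P => j; rewrite !ord1;
  by rewrite !mxE !big_ord_recl big_ord0 !mxE /= addr0 addrA.
Qed.

Lemma row3_mul_col3 a b c a' b' c' :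
  row3 a b c *m col3 a' b' c' = (a*a' + b*b' + c*c')%:M.
Proof.
apply/matrixP => i j; rewrite !ord1.
by rewrite !mxE !big_ord_recl big_ord0 !mxE /= addr0 addrA.
Qed.

Lemma mx3_inj a b c d e f g h k a' b' c' d' e' f' g' h' k' :
  mx3 a b c d e f g h k = mx3 a' b' c' d' e' f' g' h' k' ->
  [/\ a = a', b = b', c = c', d = d' & e = e'] /\ [/\ f = f', g = g', h = h' & k = k'].
Proof.
move/matrixP=> eqA.
move: (eqA 0 0) (eqA 0 1) (eqA 0 2%:R) (eqA 1 0) (eqA 1 1) (eqA 1 2%:R).
move: (eqA 2%:R 0) (eqA 2%:R 1) (eqA 2%:R 2%:R).
by rewrite !mxE.
Qed.

End Matrix3.

Definition x_exp (b : bool) : int := if b then -1 else 1.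

Definition count_y (w : seq letter) : nat := count fst w.

Fixpoint x_prefix (w : seq letter) : int :=
  if w is l :: w' then (if l.1 then 0 else x_exp l.2 + x_prefix w') else 0.

Fixpoint first_y_inv (w : seq letter) : bool :=
  if w is l :: w' then (if l.1 then l.2 else first_y_inv w') else false.

Lemma linvK : involutive linv.
Proof. by case=> a b; rewrite /linv negbK. Qed.

Lemma reducedb_ohead a w : reducedb (a :: w) -> ohead w != Some (linv a).
Proof. by case: w => [|b w] //= /andP[ba _]; apply: contra ba => /eqP[->]. Qed.

Lemma x_prefix_sign w : reducedb w ->
  match ohead w with
  | Some (false, false) => 0 < x_prefix w
  | Some (false, true) => x_prefix w < 0
  | _ => x_prefix w = 0
  end.
Proof.
elim: w => [|[[] []] w IHw] //= red_w; have := IHw (reducedb_tail red_w);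
  have := reducedb_ohead red_w; rewrite /linv /x_exp /=;
  by case: (ohead w) => [[[] []]|] //= _; lia.
Qed.

Lemma ohead_reduced w : reducedb w ->
  ohead w = if 0 < x_prefix w then Some (false, false)
            else if x_prefix w < 0 then Some (false, true)
            else if (0 < count_y w)%N then Some (true, first_y_inv w) else None.
Proof.
move=> red_w; have := x_prefix_sign red_w.
case: w red_w => [|[[] []] w] //= _ xw; first by rewrite (lt_gtF xw) xw.
by rewrite xw.
Qed.

Lemma reducedb_y_cons b w : reducedb ((true, b) :: w) -> (0 < count_y w)%N ->
  x_prefix w != 0 \/ first_y_inv w = b.
Proof.
move=> red_w cw; case: (eqVneq (x_prefix w) 0) => xw0; [right | by left].
have := reducedb_ohead red_w; rewrite (ohead_reduced (reducedb_tail red_w)) xw0 ltxx cw.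
by rewrite /linv /=; clear red_w; case: (first_y_inv w); case: b.
Qed.

Lemma prodr_intertwine (R : pzSemiRingType) (I : Type) (r : seq I) (F G : I -> R) t :
  (forall i, F i * t = t * G i) -> (\prod_(i <- r) F i) * t = t * \prod_(i <- r) G i.
Proof.
move=> FtG; elim: r => [|i r IHr]; first by rewrite !big_nil mul1r mulr1.
by rewrite !big_cons -mulrA IHr !mulrA FtG.
Qed.

Lemma rank1_col_inj (F : fieldType) m n (i0 : 'I_m) (c1 c2 : 'cV[F]_m) (r1 r2 : 'rV[F]_n) :
  c1 i0 0 = 1 -> c2 i0 0 = 1 -> r1 != 0 -> c1 *m r1 = c2 *m r2 -> c1 = c2.
Proof.
move=> c1i0 c2i0 /rV0Pn[j r1j] /matrixP eq12.
have entry i : c1 i 0 * r1 0 j = c2 i 0 * r2 0 j by have := eq12 i j; rewrite !mxE !big_ord1.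
have r12 : r1 0 j = r2 0 j by have := entry i0; rewrite c1i0 c2i0 !mul1r.
apply/matrixP => i k; rewrite ord1; apply: (mulIf r1j).
by rewrite entry r12.
Qed.

Section Representation.
Variables (L : fieldType) (lam : L).
Hypothesis lam_expz_inj : injective (fun n : int => lam ^ n).

Lemma lam_neq0 : lam != 0.
Proof.
apply/eqP => lam0; have /lam_expz_inj : lam ^ 1 = lam ^ 2.
  by rewrite lam0 !exp0rz.
by [].
Qed.

Lemma lam_expzD m n : lam ^ (m + n) = lam ^ m * lam ^ n.
Proof. by rewrite exprzDr // unitfE lam_neq0. Qed.

Lemma lam_expz_neq0 n : lam ^ n != 0.
Proof. exact: expfz_neq0 lam_neq0. Qed.

Definition tmx (n : int) := mx3 (lam ^ n) 0 0 0 1 0 0 0 1.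
Definition xmx (n : int) := mx3 (lam ^ (- n)) 0 0 0 (lam ^ n) 0 0 0 1.
Definition ymx0 : 'M[L]_3 := mx3 0 1 0 1 0 0 0 0 1.

(* [head_col e n] is [xmx n] applied to the column spanned by [ymx1 e]. *)
Definition head_col (e : bool) (n : int) : 'cV[L]_3 :=
  if e then col3 (- lam ^ (- n)) 0 1 else col3 0 (- lam ^ n) 1.
Definition yrow (b : bool) : 'rV[L]_3 := if b then row3 0 1 1 else row3 (-1) 0 (-1).
Definition ymx1 (b : bool) : 'M[L]_3 := head_col b 0 *m yrow b.

Lemma ymx1E b : ymx1 b =
  if b then mx3 0 (-1) (-1) 0 0 0 0 1 1 else mx3 0 0 0 1 0 1 (-1) 0 (-1).
Proof. by case: b; rewrite /ymx1 /= ?oppr0 expr0z col3_mul_row3; congr mx3; ring. Qed.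

Ltac mx3_field := rewrite /tmx /xmx /ymx0 ?ymx1E ?mx3_1 ?mx3_0 ?mul_mx3 ?add_mx3;
  congr mx3; rewrite ?opprK ?opprD ?lam_expzD -?invr_expz; field; rewrite ?lam_expz_neq0.

Lemma tmxD m n : tmx m * tmx n = tmx (m + n).
Proof. by mx3_field. Qed.

Lemma tmx0 : tmx 0 = 1.
Proof. by mx3_field. Qed.

Lemma xmxD m n : xmx m * xmx n = xmx (m + n).
Proof. by mx3_field. Qed.

Lemma xmx0 : xmx 0 = 1.
Proof. by mx3_field. Qed.

Lemma xmx_tmxC m n : xmx m * tmx n = tmx n * xmx m.
Proof. by mx3_field. Qed.

Lemma ymx0_sqr : ymx0 * ymx0 = 1.
Proof. by mx3_field. Qed.

Lemma ymx1_anticomm b : ymx0 * ymx1 (~~ b) + ymx1 b * ymx0 = 0.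
Proof. by case: b => /=; mx3_field. Qed.

Lemma ymx1_sqr b : ymx1 b * ymx1 (~~ b) = 0.
Proof. by case: b => /=; mx3_field. Qed.

Lemma ymx0_conj m : ymx0 * xmx m * tmx m = tmx m * ymx0.
Proof. by mx3_field. Qed.

Lemma ymx0_conjV m : xmx (- m) * ymx0 * tmx m = tmx m * ymx0.
Proof. by mx3_field. Qed.

Lemma ymx1_conj m : ymx1 false * xmx m * tmx m = tmx m * ymx1 false.
Proof. by mx3_field. Qed.

Lemma ymx1_conjV m : xmx (- m) * ymx1 true * tmx m = tmx m * ymx1 true.
Proof. by mx3_field. Qed.

Local Notation Q := {poly 'M[L]_3}.

Definition pencil (A B : 'M[L]_3) : Q := A%:P + 'X * B%:P.

Lemma pencil_mulC A B C : pencil A B * C%:P = pencil (A * C) (B * C).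
Proof. by rewrite /pencil mulrDl -mulrA -!polyCM. Qed.

Lemma mulC_pencil A B C : C%:P * pencil A B = pencil (C * A) (C * B).
Proof. by rewrite /pencil mulrDr mulrA (commr_polyX C%:P) -mulrA -!polyCM. Qed.

Lemma coef_pencilM A B p k : (pencil A B * p)`_k.+1 = A * p`_k.+1 + B * p`_k.
Proof. by rewrite /pencil mulrDl -mulrA coefD coefXM !coefCM. Qed.

Lemma pencil_y_inv b : pencil ymx0 (ymx1 b) * pencil ymx0 (ymx1 (~~ b)) = 1.
Proof.
rewrite {1}/pencil mulrDl mulC_pencil -mulrA mulC_pencil /pencil ymx0_sqr ymx1_sqr polyC0.
by rewrite mulr0 addr0 -addrA -mulrDr -polyCD ymx1_anticomm polyC0 mulr0 addr0 polyC1.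
Qed.

Lemma pencil_y_conj m :
  pencil ymx0 (ymx1 false) * (xmx m)%:P * (tmx m)%:P = (tmx m)%:P * pencil ymx0 (ymx1 false).
Proof. by rewrite !pencil_mulC mulC_pencil ymx0_conj ymx1_conj. Qed.

Lemma pencil_yV_conj m :
  (xmx (- m))%:P * pencil ymx0 (ymx1 true) * (tmx m)%:P = (tmx m)%:P * pencil ymx0 (ymx1 true).
Proof. by rewrite !mulC_pencil pencil_mulC ymx0_conjV ymx1_conjV. Qed.

Definition letter_mx (l : letter) : Q :=
  if l.1 then pencil ymx0 (ymx1 l.2) else (xmx (x_exp l.2))%:P.

Lemma letter_mx_linv l : letter_mx l * letter_mx (linv l) = 1.
Proof.
case: l => [[] b]; rewrite /letter_mx /linv /=; first exact: pencil_y_inv.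
by rewrite -polyCM xmxD; case: b; rewrite /= ?addrN ?addNr xmx0.
Qed.

Definition word_mx (w : seq letter) : Q := \prod_(l <- w) letter_mx l.

Lemma word_mx_cons l w : word_mx (l :: w) = letter_mx l * word_mx w.
Proof. exact: big_cons. Qed.

Lemma word_mx_cat v w : word_mx (v ++ w) = word_mx v * word_mx w.
Proof. exact: big_cat. Qed.

Lemma word_mx_reduce w : word_mx (reduce w) = word_mx w.
Proof.
elim: w => [|a w IHw] //=; rewrite word_mx_cons -IHw.
case: (reduce w) => [|b r]; rewrite ?word_mx_cons //.
by case: eqP => [->|_]; rewrite ?word_mx_cons // mulrA letter_mx_linv mul1r.
Qed.

Lemma word_mx_alpha_letter l :
  word_mx (alpha_l l) * (tmx 1)%:P = (tmx 1)%:P * letter_mx l.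
Proof.
rewrite /word_mx; case: l => [[] []]; rewrite !big_cons big_nil mulr1 /letter_mx /=.
- exact: pencil_yV_conj.
- exact: pencil_y_conj.
- by rewrite -!polyCM xmx_tmxC.
- by rewrite -!polyCM xmx_tmxC.
Qed.

Lemma word_mx_alphainv_letter l :
  word_mx (alphainv_l l) * (tmx (-1))%:P = (tmx (-1))%:P * letter_mx l.
Proof.
rewrite /word_mx; case: l => [[] []]; rewrite !big_cons big_nil mulr1 /letter_mx /=.
- by rewrite -pencil_yV_conj opprK.
- exact: pencil_y_conj.
- by rewrite -!polyCM xmx_tmxC.
- by rewrite -!polyCM xmx_tmxC.
Qed.

Lemma word_mx_walpha w : word_mx (walpha w) * (tmx 1)%:P = (tmx 1)%:P * word_mx w.
Proof.
rewrite /walpha word_mx_reduce /word_mx big_flatten big_map.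
exact: prodr_intertwine word_mx_alpha_letter.
Qed.

Lemma word_mx_walphainv w :
  word_mx (walphainv w) * (tmx (-1))%:P = (tmx (-1))%:P * word_mx w.
Proof.
rewrite /walphainv word_mx_reduce /word_mx big_flatten big_map.
exact: prodr_intertwine word_mx_alphainv_letter.
Qed.

Lemma polyC_tmxD m n : (tmx m)%:P * (tmx n)%:P = (tmx (m + n))%:P.
Proof. by rewrite -polyCM tmxD. Qed.

Lemma word_mx_iter f d :
  (forall v, word_mx (f v) * (tmx d)%:P = (tmx d)%:P * word_mx v) ->
  forall k w, word_mx (iter k f w) * (tmx (k%:Z * d))%:P = (tmx (k%:Z * d))%:P * word_mx w.
Proof.
move=> fd; elim=> [|k IHk] w; first by rewrite mul0r tmx0 polyC1 mulr1 mul1r.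
have -> : k.+1%:Z * d = d + k%:Z * d by rewrite -addn1 PoszD mulrDl mul1r addrC.
by rewrite -polyC_tmxD /= mulrA fd -!mulrA IHk.
Qed.

Lemma word_mx_alpha_pow n w :
  word_mx (alpha_pow n w) * (tmx n)%:P = (tmx n)%:P * word_mx w.
Proof.
case: n => k /=.
  by have := word_mx_iter word_mx_walpha k w; rewrite mulr1.
by have := word_mx_iter word_mx_walphainv k.+1 w; rewrite mulrN1 -NegzE.
Qed.

Definition elt_mx (g : G) : Q := word_mx (sval g).1 * (tmx (sval g).2)%:P.

Lemma elt_mxM g h : elt_mx (gmul g h) = elt_mx g * elt_mx h.
Proof.
case: g => [[w1 n1] ?]; case: h => [[w2 n2] ?]; rewrite /elt_mx /=.
rewrite word_mx_reduce word_mx_cat -polyC_tmxD !mulrA -(mulrA (word_mx w1)).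
by rewrite word_mx_alpha_pow !mulrA.
Qed.

Lemma word_tmx_rinv w n : exists B, word_mx w * (tmx n)%:P * B = 1.
Proof.
elim: w => [|l w [B wB]].
  by exists (tmx (- n))%:P; rewrite /word_mx big_nil mul1r polyC_tmxD addrN tmx0 polyC1.
exists (B * letter_mx (linv l)); rewrite word_mx_cons.
have -> : letter_mx l * word_mx w * (tmx n)%:P * (B * letter_mx (linv l)) =
          letter_mx l * (word_mx w * (tmx n)%:P * B) * letter_mx (linv l) by rewrite !mulrA.
by rewrite wB mulr1 letter_mx_linv.
Qed.

Lemma coef_word_mx_gt w k : (count_y w < k)%N -> (word_mx w)`_k = 0.
Proof.
elim: w k => [|[[] b] w IHw] k; first by rewrite /word_mx big_nil coef1; case: k.
  case: k => // k lt_k; rewrite word_mx_cons coef_pencilM !IHw ?mulr0 ?addr0 //.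
  by apply: ltnW.
by move=> lt_k; rewrite word_mx_cons coefCM IHw ?mulr0.
Qed.

Lemma word_mx_no_y w : count_y w = 0%N -> word_mx w = (xmx (x_prefix w))%:P.
Proof.
elim: w => [|[[] b] w IHw] //=; first by rewrite /word_mx big_nil xmx0 polyC1.
by move=> /IHw; rewrite word_mx_cons => ->; rewrite -polyCM xmxD.
Qed.

Lemma xmx_head_col m e n : xmx m *m head_col e n = head_col e (m + n).
Proof.
rewrite /xmx /head_col; case: e; rewrite mx3_mul_col3; congr col3;
  by rewrite ?opprD ?lam_expzD; ring.
Qed.

Lemma lam_expz_eq1 n : (lam ^ n == 1) = (n == 0).
Proof. by apply/eqP/eqP => [|-> //]; rewrite -(expr0z lam) => /lam_expz_inj. Qed.

Lemma ymx1_head_col b e n : n != 0 \/ e = b ->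
  exists2 c : L, c != 0 & ymx1 b *m head_col e n = c *: head_col b 0.
Proof.
move=> gap; rewrite /ymx1 -mulmxA /head_col /yrow.
case: b e gap => -[] gap; rewrite row3_mul_col3 mul_mx_scalar.
- by exists 1; rewrite ?oner_neq0 //; congr (_ *: _); ring.
- exists (1 - lam ^ n); last by congr (_ *: _); ring.
  by case: gap => // n0; rewrite subr_eq0 eq_sym lam_expz_eq1.
- exists (lam ^ (- n) - 1); last by congr (_ *: _); ring.
  by case: gap => // n0; rewrite subr_eq0 lam_expz_eq1 oppr_eq0.
- by exists (-1); rewrite ?oppr_eq0 ?oner_neq0 //; congr (_ *: _); ring.
Qed.

Lemma yrow_neq0 b : yrow b != 0.
Proof.
apply/rV0Pn; exists 2%:R; rewrite /yrow; case: b; rewrite mxE /=.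
  exact: oner_neq0.
by rewrite oppr_eq0 oner_neq0.
Qed.

Lemma row_mulmx_rinv_neq0 (r : 'rV[L]_3) (A B : 'M[L]_3) :
  A * B = 1 -> r != 0 -> r *m A != 0.
Proof.
move=> AB; apply: contraNneq => rA0.
by rewrite -(mulmx1 r) -[1%:M]AB mulmxA rA0 mul0mx.
Qed.

Lemma lead_word_mx w : reducedb w -> (0 < count_y w)%N ->
  exists2 r : 'rV_3, r != 0 &
    (word_mx w)`_(count_y w) = head_col (first_y_inv w) (x_prefix w) *m r.
Proof.
elim: w => [|[[] b] w IHw] //= red_w.
  rewrite word_mx_cons coef_pencilM coef_word_mx_gt // mulr0 add0r -mulmxE => _.
  case: (posnP (count_y w)) => [cw0|cw_pos].
    exists (yrow b *m xmx (x_prefix w)).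
      by apply: (row_mulmx_rinv_neq0 (B := xmx (- x_prefix w))) (yrow_neq0 b); rewrite xmxD addrN xmx0.
    by rewrite cw0 word_mx_no_y // coefC /= mulmxA.
  have [r r0 ->] := IHw (reducedb_tail red_w) cw_pos.
  have [c c0 yc] := ymx1_head_col (reducedb_y_cons red_w cw_pos).
  exists (c *: r); first by rewrite scaler_eq0 negb_or c0.
  by rewrite mulmxA yc -scalemxAl scalemxAr.
move=> cw; have [r r0 lead_w] := IHw (reducedb_tail red_w) cw.
by exists r; rewrite // word_mx_cons coefCM lead_w -mulmxE mulmxA xmx_head_col.
Qed.

Lemma head_col_normalized e n : head_col e n 2%:R 0 = 1.
Proof. by case: e; rewrite mxE. Qed.

Lemma head_col_inj e1 n1 e2 n2 : head_col e1 n1 = head_col e2 n2 -> e1 = e2 /\ n1 = n2.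
Proof.
move/matrixP => eq12; move: (eq12 0 0) (eq12 1 0); rewrite /head_col; clear eq12.
case: e1; case: e2; rewrite !mxE /=.
- by move=> /oppr_inj/lam_expz_inj/oppr_inj ->.
- by move/eqP; rewrite oppr_eq0 (negPf (lam_expz_neq0 _)).
- by move=> _ /eqP; rewrite oppr_eq0 (negPf (lam_expz_neq0 _)).
- by move=> _ /oppr_inj/lam_expz_inj ->.
Qed.

Lemma row_mul_tmx_neq0 (r : 'rV[L]_3) n : r != 0 -> r *m tmx n != 0.
Proof.
by apply: (row_mulmx_rinv_neq0 (B := tmx (- n))); rewrite tmxD addrN tmx0.
Qed.

Lemma head_col_mul_neq0 e n (r : 'rV[L]_3) : r != 0 -> head_col e n *m r != 0.
Proof.
apply: contraNneq => /(congr1 (row 2%:R)); rewrite row_mul row0 => <-.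
by apply/eqP/matrixP => i j; rewrite !ord1 !mxE big_ord1 !mxE head_col_normalized mul1r.
Qed.

Lemma word_tmx_ohead w1 w2 n1 n2 : reducedb w1 -> reducedb w2 ->
  word_mx w1 * (tmx n1)%:P = word_mx w2 * (tmx n2)%:P -> ohead w1 = ohead w2.
Proof.
wlog le12 : w1 w2 n1 n2 / (count_y w1 <= count_y w2)%N.
  move=> hwlog red1 red2 eq12; case: (leqP (count_y w1) (count_y w2)) => [|/ltnW] le.
    exact: hwlog le red1 red2 eq12.
  exact/esym/(hwlog _ _ _ _ le red2 red1 (esym eq12)).
move=> red1 red2 eq12.
have coef_eq k : (word_mx w1)`_k * tmx n1 = (word_mx w2)`_k * tmx n2.
  by rewrite -!coefMC eq12.
have [c2_0|c2_pos] := posnP (count_y w2).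
  have c1_0 : count_y w1 = 0%N by apply/eqP; move: le12; rewrite c2_0 leqn0.
  have := coef_eq 0%N; rewrite !word_mx_no_y // !coefC /= /xmx /tmx !mul_mx3.
  case/mx3_inj => -[_ _ _ _ +] _; rewrite !mul0r !addr0 !add0r !mulr1.
  by move/lam_expz_inj => x12; rewrite !ohead_reduced // x12 c1_0 c2_0.
have [r2 r2_0 lead2] := lead_word_mx red2 c2_pos.
have c12 : count_y w1 = count_y w2.
  apply/eqP; rewrite eqn_leq le12 leqNgt; apply/negP => lt12.
  have := coef_eq (count_y w2); rewrite coef_word_mx_gt // mul0r lead2 -mulmxE -mulmxA.
  by move/eqP; rewrite eq_sym (negPf (head_col_mul_neq0 _ _ (row_mul_tmx_neq0 _ r2_0))).
have c1_pos : (0 < count_y w1)%N by rewrite c12.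
have [r1 r1_0 lead1] := lead_word_mx red1 c1_pos.
have := coef_eq (count_y w2); rewrite -{1}c12 lead1 lead2 -!mulmxE -!mulmxA.
move/(rank1_col_inj (head_col_normalized _ _) (head_col_normalized _ _) (row_mul_tmx_neq0 _ r1_0)).
by case/head_col_inj => f12 x12; rewrite !ohead_reduced // f12 x12 c1_pos c2_pos.
Qed.

Lemma word_tmx_inj w1 w2 n1 n2 : reducedb w1 -> reducedb w2 ->
  word_mx w1 * (tmx n1)%:P = word_mx w2 * (tmx n2)%:P -> w1 = w2 /\ n1 = n2.
Proof.
elim: w1 w2 => [|l w1 IHw] w2 red1 red2 eq12; have := word_tmx_ohead red1 red2 eq12.
  case: w2 red2 eq12 => // _; rewrite /word_mx !big_nil !mul1r => /polyC_inj/matrixP/(_ 0 0).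
  by rewrite !mxE /= => /lam_expz_inj.
case: w2 red2 eq12 => // l' w2 red2 + [eq_l]; subst l'.
have linv_l : letter_mx (linv l) * letter_mx l = 1.
  by have := letter_mx_linv (linv l); rewrite linvK.
rewrite !word_mx_cons -!mulrA => /(congr1 (GRing.mul (letter_mx (linv l)))).
rewrite !mulrA linv_l !mul1r => eq12.
by have [-> ->] := IHw w2 (reducedb_tail red1) (reducedb_tail red2) eq12.
Qed.

Lemma elt_mx_inj : injective elt_mx.
Proof.
case=> [[w1 n1] red1] [[w2 n2] red2]; rewrite /elt_mx /=.
by move/(word_tmx_inj red1 red2) => /= -[eqw eqn]; apply: val_inj; rewrite /= eqw eqn.
Qed.

End Representation.

Lemma poly_mx_embedding (R : nzRingType) n :
  exists psi : {poly 'M[R]_n.+1} -> 'M[{poly R}]_n.+1,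
    [/\ injective psi, psi 1 = 1 & {morph psi : a b / a * b}].
Proof.
have [phi [[psi phiK psiK] _ _ _]] := mx_poly_ring_isom R n.
exists psi; split; first exact: can_inj psiK.
  by apply: (can_inj phiK); rewrite psiK rmorph1.
by move=> a b; apply: (can_inj phiK); rewrite rmorphM !psiK.
Qed.

Lemma embeds_in_GL3_fraction (L : fieldType) (lam : L) :
  injective (fun n : int => lam ^ n) -> embeds_in_GL 3 {fraction {poly L}}.
Proof.
move=> lam_expz_inj; have [psi [psi_inj psi1 psiM]] := poly_mx_embedding L 2.
pose frac_mx (A : 'M[{poly L}]_3) : 'M[{fraction {poly L}}]_3 := map_mx (@tofrac _) A.
pose rho g := frac_mx (psi (elt_mx lam g)).
have rhoM g h : rho (gmul g h) = rho g *m rho h.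
  by rewrite /rho elt_mxM // (psiM (elt_mx lam g)) -map_mxM.
exists rho; split; [|split=> //].
  move=> g; have [B gB] := word_tmx_rinv lam_expz_inj (sval g).1 (sval g).2.
  have rhoB : rho g *m frac_mx (psi B) = 1%:M.
    by rewrite /rho /frac_mx /elt_mx -map_mxM mulmxE -psiM gB psi1 rmorph1.
  exact: (mulmx1_unit rhoB).1.
move=> g h /matrixP eq_gh; apply: (elt_mx_inj lam_expz_inj); apply: psi_inj.
apply/matrixP => i j; apply/eqP; rewrite -tofrac_eq.
by move: (eq_gh i j); rewrite !mxE => ->.
Qed.

Lemma tofracX_expz_inj (K : fieldType) :
  injective (fun n : int => (tofrac 'X : {fraction {poly K}}) ^ n).
Proof.
set lam := tofrac 'X.
have lam_unit : lam \is a GRing.unit by rewrite unitfE tofrac_eq0 polyX_eq0.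
have expn_eq1 k : lam ^+ k = 1 -> k = 0%N.
  rewrite -rmorphXn -tofrac1 => /eqP; rewrite tofrac_eq => /eqP Xk1.
  by have := congr1 (fun p : {poly K} => size p) Xk1; rewrite size_polyXn size_poly1 => -[].
have expz_eq1 n : lam ^ n = 1 -> n = 0.
  case: n => k /=; first by move/expn_eq1 ->.
  by rewrite NegzE -exprnN => /eqP; rewrite invr_eq1 => /eqP /expn_eq1.
move=> m n /= eq_mn; apply/eqP; rewrite -subr_eq0; apply/eqP/expz_eq1.
by rewrite exprzDr // eq_mn -exprzDr // subrr.
Qed.

Lemma pchar_fraction_poly (K : fieldType) : [pchar {fraction {poly K}}] =i [pchar K].
Proof.
move=> p; rewrite !inE; congr (_ && _).
by rewrite -(rmorph_nat (@tofrac _)) tofrac_eq0 -(rmorph_nat (@polyC K)) polyC_eq0.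
Qed.

Theorem proposition5p5 :
  forall p : nat, p = 0%N \/ prime p ->
    exists (F : fieldType) (d : nat),
      (d <= 6)%N /\ has_char F p /\ embeds_in_GL d F.
Proof.
pose F (K : fieldType) : fieldType := {fraction {poly {fraction {poly K}}}}.
have embF K : embeds_in_GL 3 (F K) := embeds_in_GL3_fraction (@tofracX_expz_inj K).
have pcharF K : [pchar F K] =i [pchar K] by move=> q; rewrite !pchar_fraction_poly.
move=> p [-> | p_prime].
  exists (F rat), 3%N; do !split; last exact: embF.
  by move=> q; rewrite pcharF Num.Theory.pchar_num.
exists (F 'F_p), 3%N; do !split; last exact: embF.
by rewrite /has_char gtn_eqF ?prime_gt0 // pcharF pchar_Fp.
Qed.
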